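(* Fix $\alpha\in(0,1)$. In the two-sided weakly dependent Gaussian testing model described in the context, suppose $n_1\to\infty$ and $n_1/n\to p_1\in(0,1]$ as $n\to\infty$, and let $\mu_{(n_1)}=\max_{i\in\mathcal I_1}|\mu_i|$. If $\lim_{n_1\to\infty}\frac{\sqrt{2\log n_1}}{\mu_{(n_1)}}$ exists and is strictly less than $1$, then for both the two-sided adjusted Bonferroni procedure and the two-sided Sidak procedure, $\lim_{n\to\infty}AnyPwr_{BS}=1$.
   Context: $\Phi$ denotes the standard normal distribution function. Let $(\rho_{ij})_{i,j\ge1}$ be a symmetric array with $\rho_{ii}=1$ and $\rho_{ij}\in(-1,1)$ for $i\ne j$, such that for each $n$ the matrix $\Sigma_n=(\rho_{ij})_{1\le i,j\le n}$ is a valid correlation matrix. Put $\rho_m=\sup_{i\ge1}|\rho_{i,\,i+m}|$ and assume the weak dependence condition: $\gamma:=\sup_{m\ge 1}\rho_m<1$ and $\rho_m=o(1/\log m)$ as $m\to\infty$. For each $n$ one observes $(X_1,\dots,X_n)$, jointly Gaussian with $\mathbb{E}X_i=\mu_i$ (the means may depend on $n$), $\mathrm{Var}(X_i)=1$ and correlation matrix $\Sigma_n$. One tests $H_{0i}:\mu_i=0$ versus $H_{1i}:\mu_i\neq0$, $i=1,\dots,n$. Let $\mathcal I_1=\{i\le n:\mu_i\ne0\}$, $n_1=|\mathcal I_1|$. Define $c_{Bon}(m,\alpha):=\Phi^{-1}\bigl(1-\frac{-\log(1-\alpha)}{m}\bigr)$ and $c_{Sid}(m,\alpha):=\Phi^{-1}\bigl((1-\alpha)^{1/m}\bigr)$.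 The two-sided adjusted Bonferroni procedure rejects $H_{0i}$ iff $|X_i|>c_{Bon}(2n,\alpha)$; the two-sided Sidak procedure rejects $H_{0i}$ iff $|X_i|>c_{Sid}(2n,\alpha)$. For a procedure rejecting when $|X_i|>c$, $AnyPwr_{BS}=\mathbb{P}\bigl(|X_i|>c\text{ for some }i\in\mathcal I_1\bigr)$. *)

From HB Require Import structures.
From mathcomp Require Import all_boot all_order all_algebra.
From mathcomp Require Import all_classical all_reals all_analysis.
Set Implicit Arguments. Unset Strict Implicit. Unset Printing Implicit Defensive.
Import Order.TTheory GRing.Theory Num.Theory.
Import numFieldNormedType.Exports.
Local Open Scope classical_set_scope.
Local Open Scope ring_scope.

Section Defs.
Variable R : realType.

Definition gauss_law (m v : R) (A : set R) : \bar R :=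
  if v == 0 then \d_m A else normal_prob m (Num.sqrt v) A.

Definition jointly_gaussian d (T : measurableType d) (P : probability T R)
  (n : nat) (X : 'I_n -> T -> R) (mu : 'I_n -> R) (S : 'I_n -> 'I_n -> R) :=
  forall (c : 'I_n -> R) (A : set R), measurable A ->
    P ((fun w => \sum_(i < n) c i * X i w) @^-1` A) =
    gauss_law (\sum_(i < n) c i * mu i)
              (\sum_(i < n) \sum_(j < n) c i * c j * S i j) A.

Definition Phi (x : R) : R := fine (normal_prob 0 1 `]-oo, x]).
Definition Phiinv (p : R) : R := sup [set x | Phi x <= p].

Definition c_Bon (m : nat) (alpha : R) : R :=
  Phiinv (1 - (- ln (1 - alpha)) / m%:R).
Definition c_Sid (m : nat) (alpha : R) : R :=
  Phiinv (powR (1 - alpha) (m%:R^-1)).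

Definition rho_lag (rho : nat -> nat -> R) (m : nat) : R :=
  sup [set `|rho i (i + m)%N| | i in [set: nat]].

Definition correlation_array (rho : nat -> nat -> R) :=
  (forall i j, rho i j = rho j i) /\ (forall i, rho i i = 1) /\
  (forall i j, i <> j -> -1 < rho i j < 1) /\
  (forall (n : nat) (c : 'I_n -> R),
      0 <= \sum_(i < n) \sum_(j < n) c i * c j * rho i j).

Definition weakly_dependent (rho : nat -> nat -> R) :=
  sup [set rho_lag rho m | m in [set m : nat | (1 <= m)%N]] < 1 /\
  (fun m : nat => rho_lag rho m * ln m%:R) @ \oo --> 0.

Definition n_one (n : nat) (mu : 'I_n -> R) : nat := #|[set i | mu i != 0]|.
(* mu_(n_1) = max_{i in I_1} |mu_i| (0 if I_1 is empty) *)
Definition mu_max (n : nat) (mu : 'I_n -> R) : R :=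
  \big[Num.max/0]_(i < n | mu i != 0) `|mu i|.

Definition AnyPwr d (T : measurableType d) (P : probability T R) (n : nat)
  (X : 'I_n -> T -> R) (mu : 'I_n -> R) (c : R) : R :=
  fine (P [set w | exists i : 'I_n, mu i != 0 /\ c < `|X i w|]).

End Defs.

From HB Require Import structures.
From mathcomp Require Import all_boot all_order all_algebra.
From mathcomp Require Import all_classical all_reals all_analysis.
From mathcomp Require Import ring lra measurable_realfun.
Import Order.TTheory GRing.Theory Num.Theory.
Import numFieldNormedType.Exports.
Local Open Scope classical_set_scope.
Local Open Scope ring_scope.

(* Pick a signal i with |mu_i| = mu_(n1).  Since X_i ~ N(mu_i, 1), the
   rejection event contains {|X_i| > c}, whose probability is at least
   1 - exp(-(|mu_i| - c)^2 / 2): on [-c, c] the N(mu_i, 1) density is at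
   most exp(-s^2/2) times the N(mu_i + s, 1) density, s = -/+ (|mu_i| - c).
   Hence it suffices that mu_(n1) - c -> +oo.  Both critical values are at
   most sqrt(2 log(8 n / a)) with a = -log(1 - alpha), which is
   sqrt(2 log n1) + O(1) because n1 / n -> p1 > 0, whereas
   mu_(n1) >= q sqrt(2 log n1) eventually for some q > 1 because the ratio
   tends to L < 1. *)

Section gaussian_tail.
Variable R : realType.

Lemma normal_pdf_shift_le (m s x : R) : 0 <= s * (x - (m + s)) ->
  normal_pdf m 1 x <= expR (- s ^+ 2 / 2) * normal_pdf (m + s) 1 x.
Proof.
move=> sx; rewrite /normal_pdf oner_eq0 /= /normal_fun.
rewrite mulrCA ler_pM2l ?normal_peak_gt0 ?oner_eq0// -expRD ler_expR expr1n.
have -> : (x - m) ^+ 2 = s ^+ 2 + (x - (m + s)) ^+ 2 + 2 * (s * (x - (m + s))).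
  by ring.
lra.
Qed.

Lemma normal_prob_le_of_pdf_le (m m' k : R) (A : set R) : measurable A ->
  0 <= k -> (forall x, A x -> normal_pdf m 1 x <= k * normal_pdf m' 1 x) ->
  (normal_prob m 1 A <= k%:E)%E.
Proof.
move=> mA k0 pdf_le.
have pdf_ge0 (a : R) x : A x -> (0 <= (normal_pdf a 1 x)%:E)%E.
  by rewrite lee_fin normal_pdf_ge0.
have mpdf (a : R) : measurable_fun A (fun x => (normal_pdf a 1 x)%:E).
  by apply/measurable_EFinP; apply: measurable_funTS; exact: measurable_normal_pdf.
apply: (@le_trans _ _ (\int[lebesgue_measure]_(x in A) (k%:E * (normal_pdf m' 1 x)%:E))%E).
  apply: ge0_le_integral => //; [exact: pdf_ge0 | exact: mpdf |].
  by apply: measurable_funeM; exact: mpdf.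
rewrite ge0_integralZl_EFin //; [|exact: pdf_ge0 | exact: mpdf].
rewrite -[leRHS]mule1 lee_wpmul2l ?lee_fin //.
exact: (@probability_le1 _ _ _ (normal_prob m' 1)).
Qed.

Lemma normal_prob_tail (m s : R) (A : set R) : measurable A ->
  (forall x, A x -> 0 <= s * (x - (m + s))) ->
  (normal_prob m 1 A <= (expR (- s ^+ 2 / 2))%:E)%E.
Proof.
move=> mA As; apply: (@normal_prob_le_of_pdf_le m (m + s)) => // x Ax.
exact/normal_pdf_shift_le/As.
Qed.

Lemma normal_prob_itv_le (m c t : R) : 0 <= t <= `|m| - c ->
  (normal_prob m 1 `[(- c)%R, c] <= (expR (- t ^+ 2 / 2))%:E)%E.
Proof.
case/andP=> t0 tc; have [m0|m0] := leP 0 m.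
  rewrite -sqrrN; apply: normal_prob_tail => // x /=.
  rewrite in_itv /= => /andP[_ xc]; move: tc; rewrite ger0_norm //.
  by nra.
apply: normal_prob_tail => // x /=.
rewrite in_itv /= => /andP[cx _]; move: tc; rewrite ltr0_norm //.
by nra.
Qed.

End gaussian_tail.

Section standard_normal_quantile.
Variable R : realType.
Local Notation N01 := (normal_prob (0 : R) 1).

Lemma Phi_le : {homo @Phi R : x y / x <= y}.
Proof.
move=> x y xy; rewrite /Phi; apply: fine_le; rewrite ?fin_num_measure //.
by apply: le_measure; rewrite ?inE // => z /=; rewrite !in_itv /= => /le_trans; apply.
Qed.

Lemma Phi_ge (x : R) : 0 <= x -> 1 - expR (- x ^+ 2 / 2) <= Phi x.
Proof.
move=> x0; have mx : measurable (`]x, +oo[ : set R) by [].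
have tail : (N01 `]x, +oo[ <= (expR (- x ^+ 2 / 2))%:E)%E.
  apply: normal_prob_tail => // y /=; rewrite in_itv /= andbT add0r => xy.
  by rewrite mulr_ge0 // subr_ge0 ltW.
rewrite /Phi -setCitvr probability_setC // fineB ?fin_num_measure //= lerB //.
by rewrite -lee_fin fineK ?fin_num_measure.
Qed.

(* [0 <= x] covers the case of an empty set, whose [sup] is [0]. *)
Lemma Phiinv_le (p x : R) : 0 <= x -> p < Phi x -> Phiinv p <= x.
Proof.
move=> x0 px; rewrite /Phiinv.
have [->|/set0P ne] := eqVneq [set y | Phi y <= p] set0; first by rewrite sup0.
apply: ge_sup => // y /= yp; rewrite leNgt; apply/negP => /ltW /Phi_le.
lra.
Qed.

Lemma Phiinv_le_sqrt_ln (p s : R) : 0 < s <= 1 -> s < 1 - p ->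
  Phiinv p <= Num.sqrt (2 * ln s^-1).
Proof.
case/andP=> s0 s1 sp; have ln_ge0 : 0 <= ln s^-1 by rewrite ln_ge0 // invf_ge1.
apply: Phiinv_le; first exact: sqrtr_ge0.
apply: lt_le_trans (Phi_ge _ (sqrtr_ge0 _)).
rewrite sqr_sqrtr ?mulr_ge0 // mulNr mulrC mulKf // expRN lnK ?invrK ?posrE ?invr_gt0 //.
lra.
Qed.

Lemma ln1B_lt0 (alpha : R) : 0 < alpha < 1 -> ln (1 - alpha) < 0.
Proof. by case/andP=> a0 a1; rewrite ln_lt0 //; apply/andP; split; lra. Qed.

Lemma c_Bon_le (m : nat) (alpha : R) : 0 < alpha < 1 ->
  - ln (1 - alpha) <= m%:R ->
  c_Bon m alpha <= Num.sqrt (2 * ln (4 * m%:R / - ln (1 - alpha))).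
Proof.
move=> alpha01; set a := - ln (1 - alpha) => am.
have a_gt0 : 0 < a by rewrite oppr_gt0 ln1B_lt0.
have m_gt0 : 0 < m%:R :> R by apply: lt_le_trans am.
rewrite -invf_div; apply: Phiinv_le_sqrt_ln.
  rewrite divr_gt0 ?mulr_gt0 //= ler_pdivrMr ?mulr_gt0 //; lra.
rewrite opprB addrC subrK ltr_pM2l // ltf_pV2 ?posrE ?mulr_gt0 //; lra.
Qed.

Lemma c_Sid_le (m : nat) (alpha : R) : 0 < alpha < 1 ->
  - ln (1 - alpha) <= m%:R ->
  c_Sid m alpha <= Num.sqrt (2 * ln (4 * m%:R / - ln (1 - alpha))).
Proof.
move=> alpha01; set a := - ln (1 - alpha) => am.
have a_gt0 : 0 < a by rewrite oppr_gt0 ln1B_lt0.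
have m_gt0 : 0 < m%:R :> R by apply: lt_le_trans am.
set u := a / m%:R.
have u_gt0 : 0 < u by rewrite divr_gt0.
have u_le1 : u <= 1 by rewrite ler_pdivrMr // mul1r.
rewrite /c_Sid; have -> : powR (1 - alpha) m%:R^-1 = expR (- u).
  have [_ alpha_lt1] := andP alpha01.
  by rewrite /powR subr_eq0 gt_eqF //= /u /a mulNr opprK mulrC.
have exp_le : expR (- u) <= (1 + u)^-1.
  by rewrite expRN lef_pV2 ?posrE ?expR_gt0 ?addr_gt0 // expR_ge1Dx.
rewrite -invf_div; apply: Phiinv_le_sqrt_ln.
  by rewrite divr_gt0 ?mulr_gt0 //= ler_pdivrMr ?mulr_gt0 //; lra.
apply: lt_le_trans (_ : u / 2 <= _).
  have -> : a / (4 * m%:R) = u / 4 by rewrite /u; field; rewrite gt_eqF.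
  lra.
suff : u / 2 <= 1 - (1 + u)^-1 by lra.
have -> : 1 - (1 + u)^-1 = u / (1 + u) by field; rewrite gt_eqF ?addr_gt0.
rewrite ler_pM2l // lef_pV2 ?posrE ?addr_gt0 //; lra.
Qed.

End standard_normal_quantile.

Section any_rejection.
Context {R : realType} {d : measure_display} {T : measurableType d}.
Context {P : probability T R} {n : nat} {X : 'I_n -> {RV P >-> R}} {mu : 'I_n -> R}.

Lemma jointly_gaussian_marginal {S : 'I_n -> 'I_n -> R} {i : 'I_n} {A : set R} :
  jointly_gaussian P (fun j => X j) mu S -> S i i = 1 -> measurable A ->
  P (X i @^-1` A) = normal_prob (mu i) 1 A.
Proof.
move=> JG Sii mA; pose e j : R := (j == i)%:R.
have sum_e (f : 'I_n -> R) : \sum_(j < n) e j * f j = f i.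
  rewrite (bigD1 i) //= /e eqxx mul1r big1 ?addr0 // => j /negbTE ->.
  by rewrite mul0r.
have -> : X i @^-1` A = (fun w => \sum_(j < n) e j * X j w) @^-1` A.
  by apply/seteqP; split => w /=; rewrite sum_e.
rewrite JG // sum_e.
under eq_bigr do under eq_bigr do rewrite -mulrA.
under eq_bigr do rewrite -mulr_sumr.
by rewrite !sum_e /gauss_law Sii oner_eq0 sqrtr1.
Qed.

Let rejection (c : R) := [set w | exists i, mu i != 0 /\ c < `|X i w|].

Lemma measurable_rejection (c : R) : measurable (rejection c).
Proof.
have -> : rejection c =
    \bigcup_(i in [set i | mu i != 0]) ((fun w => `|X i w|) @^-1` `]c, +oo[).
  apply/seteqP; split => w /=.
    by case=> i [mui cX]; exists i => //=; rewrite in_itv /= andbT.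
  by case=> i /= mui; rewrite in_itv /= andbT => cX; exists i.
apply: (@fin_bigcup_measurable _ T 'I_n); first exact: finite_finset.
move=> i _; rewrite -[_ @^-1` _]setTI.
by apply: (measurableT_comp (@normr_measurable _ setT)) => //.
Qed.

Lemma AnyPwr_le1 (c : R) : AnyPwr P (fun i => X i) mu c <= 1.
Proof.
have mE := measurable_rejection c.
by rewrite -lee_fin fineK ?fin_num_measure ?probability_le1.
Qed.

Lemma AnyPwr_ge {S : 'I_n -> 'I_n -> R} {i : 'I_n} {c t : R} :
  jointly_gaussian P (fun j => X j) mu S -> S i i = 1 -> mu i != 0 ->
  0 <= t <= `|mu i| - c ->
  1 - expR (- t ^+ 2 / 2) <= AnyPwr P (fun j => X j) mu c.
Proof.
move=> JG Sii mui tc; set I := `[(- c)%R, c]%classic : set R.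
have mI : measurable I by exact: measurable_itv.
have outside_sub : X i @^-1` (~` I) `<=` rejection c.
  move=> w /=; rewrite /I /= in_itv /= -ler_norml => /negP; rewrite -ltNge => cX.
  by exists i.
have mE := measurable_rejection c.
have P_outside_le : (P (X i @^-1` ~` I) <= P (rejection c))%E.
  by apply: le_measure; rewrite ?inE //; exact/measurable_funPTI/measurableC.
rewrite (jointly_gaussian_marginal JG Sii (measurableC mI)) probability_setC // in P_outside_le.
rewrite /AnyPwr -(fineK (fin_num_measure P _ mE)) in P_outside_le.
rewrite -lee_fin; apply: le_trans P_outside_le.
by rewrite EFinB leeB // normal_prob_itv_le.
Qed.

End any_rejection.

Lemma mu_max_attained (R : realType) (n : nat) (mu : 'I_n -> R) :
  (0 < n_one mu)%N -> exists2 i, mu i != 0 & mu_max mu = `|mu i|.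
Proof.
rewrite /n_one => /card_gt0P[j]; rewrite inE => muj.
rewrite /mu_max (bigmax_eq_arg 0 j) //.
by case: arg_maxP => // i mui _; exists i.
Qed.

Lemma sqrtrD_le (R : rcfType) (a b : R) : 0 <= a -> 0 <= b ->
  Num.sqrt (a + b) <= Num.sqrt a + Num.sqrt b.
Proof.
move=> a0 b0; rewrite -(@ler_pXn2r _ 2) ?nnegrE ?addr_ge0 ?sqrtr_ge0 //.
rewrite sqrrD !sqr_sqrtr ?addr_ge0 //.
have := mulr_ge0 (sqrtr_ge0 a) (sqrtr_ge0 b); lra.
Qed.

Lemma sqrt_ln_le (R : realType) (x y k : R) : 1 <= x -> 0 < k -> 0 < y <= k * x ->
  Num.sqrt (2 * ln y) <= Num.sqrt (2 * ln x) + Num.sqrt (2 * `|ln k|).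
Proof.
move=> x1 k0 /andP[y0 ykx]; have x0 : 0 < x by apply: lt_le_trans x1.
have lnx : 0 <= 2 * ln x by rewrite mulr_ge0 ?ln_ge0.
have lnk : 0 <= 2 * `|ln k| by rewrite mulr_ge0.
apply: le_trans (sqrtrD_le _ _ _ lnx lnk).
apply: ler_wsqrtr; rewrite -mulrDr ler_pM2l //.
have : ln y <= ln (k * x) by rewrite ler_ln ?posrE ?mulr_gt0.
rewrite lnM ?posrE //; have := ler_norm (ln k); lra.
Qed.

Section filter_limits.
Context {R : realType} {I : Type} {F : set_system I} {FF : Filter F}.

Lemma sqrt_ln_cvgy {N : I -> R} : N @ F --> +oo ->
  (fun x => Num.sqrt (2 * ln (N x))) @ F --> +oo.
Proof.
move/cvgryPge => N_ge; apply/cvgryPge => A; near=> x.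
have NA : expR (A ^+ 2 / 2) <= N x by near: x; exact: N_ge.
have : A ^+ 2 / 2 <= ln (N x).
  by rewrite -ler_expR lnK // posrE (lt_le_trans (expR_gt0 _) NA).
move=> lnN; apply: le_trans (ler_norm A) _.
by rewrite -sqrtr_sqr ler_wsqrtr //; lra.
Unshelve. all: by end_near. Qed.

Lemma cvg_ratio_lt {u v : I -> R} {l r : R} : l < r ->
  (fun x => u x / v x) @ F --> l -> (\forall x \near F, 0 < v x) ->
  \forall x \near F, u x < r * v x.
Proof.
move=> lr /cvgrPdist_lt uv v_gt0; near=> x.
have : `|l - u x / v x| < r - l by near: x; apply: uv; rewrite subr_gt0.
have vx : 0 < v x by near: x; exact: v_gt0.
rewrite ltr_norml => /andP[uv_lt _].
have : u x / v x < r by lra.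
by rewrite ltr_pdivrMr // mulrC.
Unshelve. all: by end_near. Qed.

Lemma cvg_ratio_gt {u v : I -> R} {l r : R} : r < l ->
  (fun x => u x / v x) @ F --> l -> (\forall x \near F, 0 < v x) ->
  \forall x \near F, r * v x < u x.
Proof.
move=> rl /cvgrPdist_lt uv v_gt0; near=> x.
have : `|l - u x / v x| < l - r by near: x; apply: uv; rewrite subr_gt0.
have vx : 0 < v x by near: x; exact: v_gt0.
rewrite ltr_norml => /andP[_ uv_gt].
have : r < u x / v x by lra.
by rewrite ltr_pdivlMr // mulrC.
Unshelve. all: by end_near. Qed.

Lemma cvgry_gap {s M c : I -> R} {q C : R} : 1 < q -> s @ F --> +oo ->
  (\forall x \near F, q * s x <= M x) -> (\forall x \near F, c x <= s x + C) ->
  (fun x => M x - c x) @ F --> +oo.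
Proof.
move=> q1 /cvgryPge s_ge M_ge c_le; apply/cvgryPge => A; near=> x.
have : (A + C) / (q - 1) <= s x by near: x; exact: s_ge.
rewrite ler_pdivrMr ?subr_gt0 // mulrBr mulr1 => sA.
have : q * s x <= M x by near: x; exact: M_ge.
have : c x <= s x + C by near: x; exact: c_le.
rewrite mulrC in sA; lra.
Unshelve. all: by end_near. Qed.

Lemma cvg_expR_sqr {g : I -> R} : g @ F --> +oo ->
  (fun x => expR (- g x ^+ 2 / 2)) @ F --> 0.
Proof.
move=> g_oo; have g2_oo : (fun x => g x ^+ 2 / 2) @ F --> +oo.
  apply/cvgryPge => A; near=> x.
  have : Num.max A 2 <= g x by near: x; exact: cvgry_ge.
  rewrite ge_max => /andP[Ag g2]; nra.
have := cvg_comp _ _ g2_oo (@cvgr_expR R).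
by move=> h; under eq_fun do rewrite mulNr.
Unshelve. all: by end_near. Qed.

End filter_limits.

Section any_power_limit.
Context {R : realType} {d : measure_display} {T : nat -> measurableType d}.
Context {P : forall n, probability (T n) R} {X : forall n, 'I_n -> {RV P n >-> R}}.
Context {mu : forall n, 'I_n -> R} {rho : nat -> nat -> R} {p1 L : R}.
Hypothesis rho_diag : forall i, rho i i = 1.
Hypothesis JG : forall n,
  jointly_gaussian (P n) (fun i => X n i) (mu n) (fun i j => rho i j).
Let N n : R := (n_one (mu n))%:R.
Let M n : R := mu_max (mu n).
Hypothesis N_cvgy : N @ \oo --> +oo.
Hypothesis p1_gt0 : 0 < p1.
Hypothesis N_ratio_cvg : (fun n => N n / n%:R) @ \oo --> p1.
Hypothesis L_lt1 : L < 1.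
Hypothesis M_ratio_cvg : (fun n => Num.sqrt (2 * ln (N n)) / M n) @ \oo --> L.

Let N_ge1 : \forall n \near \oo, 1 <= N n.
Proof. exact: cvgry_ge. Qed.

Let mu_max_attained_near :
  \forall n \near \oo, exists2 i, mu n i != 0 & M n = `|mu n i|.
Proof.
near=> n; apply: mu_max_attained; rewrite -(ler1n R); near: n; exact: N_ge1.
Unshelve. all: by end_near. Qed.

Lemma mu_max_sub_cvgy {b : R} {c : nat -> R} : 0 < b ->
  (\forall n \near \oo, c n <= Num.sqrt (2 * ln (b * n%:R))) ->
  (fun n => M n - c n) @ \oo --> +oo.
Proof.
move=> b_gt0 c_le; set s := fun n => Num.sqrt (2 * ln (N n)).
have [r [r_gt0 L_lt_r r_lt1]] : exists r, [/\ 0 < r, L < r & r < 1].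
  exists (Num.max ((1 + L) / 2) (1 / 2)); rewrite !lt_max !gt_max.
  have := L_lt1; split; [apply/orP; right | apply/orP; left | apply/andP; split]; lra.
have M_gt0 : \forall n \near \oo, 0 < M n.
  near=> n; suff [i mui ->] : exists2 i, mu n i != 0 & M n = `|mu n i|.
    by rewrite normr_gt0.
  by near: n; exact: mu_max_attained_near.
have M_ge : \forall n \near \oo, r^-1 * s n <= M n.
  apply: filterS (cvg_ratio_lt L_lt_r M_ratio_cvg M_gt0) => n sM.
  by rewrite ler_pdivrMl // ltW.
have n_gt0 : \forall n \near \oo, 0 < n%:R :> R by exact: nbhs_infty_gtr.
have p1n_lt : \forall n \near \oo, p1 / 2 * n%:R < N n.
  by apply: (cvg_ratio_gt _ N_ratio_cvg n_gt0); have := p1_gt0; lra.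
have c_le_s : \forall n \near \oo,
    c n <= s n + Num.sqrt (2 * `|ln (2 * b / p1)|).
  near=> n; have cn : c n <= Num.sqrt (2 * ln (b * n%:R)) by near: n.
  have n0 : 0 < n%:R :> R by near: n.
  have p1n : p1 / 2 * n%:R < N n by near: n.
  apply: (le_trans cn); apply: sqrt_ln_le; first by near: n.
    by rewrite !mulr_gt0 ?invr_gt0.
  rewrite mulr_gt0 //=.
  have -> : b * n%:R = 2 * b / p1 * (p1 / 2 * n%:R) by field; rewrite gt_eqF.
  by rewrite ler_pM2l ?ltW // !mulr_gt0 ?invr_gt0.
by apply: (cvgry_gap _ (sqrt_ln_cvgy N_cvgy) M_ge c_le_s); rewrite invf_gt1.
Unshelve. all: by end_near. Qed.

Lemma AnyPwr_cvg1 {b : R} {c : nat -> R} : 0 < b ->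
  (\forall n \near \oo, c n <= Num.sqrt (2 * ln (b * n%:R))) ->
  (fun n => AnyPwr (P n) (fun i => X n i) (mu n) (c n)) @ \oo --> (1 : R).
Proof.
move=> b_gt0 c_le; have gap_cvgy := mu_max_sub_cvgy b_gt0 c_le.
have lower_cvg : (fun n => 1 - expR (- (M n - c n) ^+ 2 / 2)) @ \oo --> (1 : R).
  by rewrite -[X in _ --> X]subr0; apply: cvgB; [exact: cvg_cst | exact: cvg_expR_sqr].
apply: (squeeze_cvgr _ lower_cvg (cvg_cst (1 : R))); near=> n.
rewrite AnyPwr_le1 andbT.
have [i mui Mi] : exists2 i, mu n i != 0 & M n = `|mu n i|.
  by near: n; exact: mu_max_attained_near.
have gap_ge0 : 0 <= M n - c n by near: n; exact: cvgry_ge.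
apply: (AnyPwr_ge (JG n) (rho_diag i) mui).
by rewrite gap_ge0 -Mi lexx.
Unshelve. all: by end_near. Qed.

End any_power_limit.

Theorem theorem5p3 (R : realType) (alpha : R) (rho : nat -> nat -> R)
  (d : measure_display) (T : nat -> measurableType d)
  (P : forall n, probability (T n) R)
  (X : forall n, 'I_n -> {RV P n >-> R})
  (mu : forall n, 'I_n -> R) :
  0 < alpha < 1 ->
  correlation_array rho ->
  weakly_dependent rho ->
  (forall n, jointly_gaussian (P n) (fun i => X n i) (mu n)
                (fun i j => rho i j)) ->
  (fun n => ((n_one (mu n))%:R : R)) @ \oo --> +oo ->
  (exists p1 : R, 0 < p1 <= 1 /\
     (fun n => ((n_one (mu n))%:R : R) / n%:R) @ \oo --> p1) ->
  (exists L : R, L < 1 /\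
     (fun n => Num.sqrt (2 * ln ((n_one (mu n))%:R : R)) / mu_max (mu n))
       @ \oo --> L) ->
  (fun n => AnyPwr (P n) (fun i => X n i) (mu n) (c_Bon (2 * n) alpha))
     @ \oo --> (1 : R) /\
  (fun n => AnyPwr (P n) (fun i => X n i) (mu n) (c_Sid (2 * n) alpha))
     @ \oo --> (1 : R).
Proof.
move=> alpha01 [_ [rho_diag _]] _ JG N_cvgy [p1 [/andP[p1_gt0 _] N_ratio]] [L [L_lt1 M_ratio]].
set a := - ln (1 - alpha).
have a_gt0 : 0 < a by rewrite oppr_gt0 ln1B_lt0.
have crit_le (crit : nat -> R -> R) :
    (forall m, a <= m%:R -> crit m alpha <= Num.sqrt (2 * ln (4 * m%:R / a))) ->
    \forall n \near \oo, crit (2 * n)%N alpha <= Num.sqrt (2 * ln (8 / a * n%:R)).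
  move=> crit_bound; near=> n.
  have -> : 8 / a * n%:R = 4 * (2 * n)%:R / a by rewrite natrM; field; rewrite gt_eqF.
  apply: crit_bound; near: n; apply: filterS (nbhs_infty_ger a) => n an.
  by rewrite natrM; have : (0:R) <= n%:R by []; lra.
have b_gt0 : 0 < 8 / a by rewrite divr_gt0.
split; apply: (AnyPwr_cvg1 rho_diag JG N_cvgy p1_gt0 N_ratio L_lt1 M_ratio b_gt0).
- by apply: crit_le => m; exact: c_Bon_le.
- by apply: crit_le => m; exact: c_Sid_le.
Unshelve. all: by end_near. Qed.
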